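(* Let $(X,d)$ be a sequentially right $K$-complete quasi-metric space and $\varphi:X\to\mathbb{R}\cup\{\infty\}$ a proper, bounded below, nearly lower semicontinuous function. For $x\in X$ let $S(x)=\{y\in X:\varphi(y)+d(y,x)\le\varphi(x)\}$. Suppose that for every $x\in X$ with $\varphi(x)>\inf\varphi(X)$ there exists $y\in S(x)$ with $\varphi(y)<\varphi(x)$. Then there exists $z\in X$ with $\varphi(z)=\inf\varphi(X)$.
   Context: A quasi-metric on $X$ is $d:X\times X\to[0,\infty)$ with $d(x,x)=0$, $d(x,z)\le d(x,y)+d(y,z)$, and $d(x,y)=d(y,x)=0\Rightarrow x=y$ (no symmetry). Topology $\tau_d$: neighbourhood base at $x$ given by $\{y:d(x,y)<r\}$, $r>0$; $x_n\to x$ iff $d(x,x_n)\to0$. A sequence $(x_n)$ is right $K$-Cauchy if for every $\varepsilon>0$ there is $n_\varepsilon$ with $d(x_{n+k},x_n)<\varepsilon$ for all $n\ge n_\varepsilon$, $k\in\mathbb{N}$; $X$ is sequentially right $K$-complete if every right $K$-Cauchy sequence converges. $\varphi$ is proper if finite somewhere; nearly lower semicontinuous if $\varphi(x)\le\liminf_n\varphi(x_n)$ for every sequence with pairwise distinct terms converging to $x$. *)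

From Stdlib Require Import Reals.
From Coquelicot Require Export Coquelicot.
Open Scope R_scope.

Definition is_quasi_metric {X : Type} (d : X -> X -> R) : Prop :=
  (forall x y, 0 <= d x y) /\
  (forall x, d x x = 0) /\
  (forall x y z, d x z <= d x y + d y z) /\
  (forall x y, d x y = 0 -> d y x = 0 -> x = y).

Definition qm_converges {X : Type} (d : X -> X -> R) (u : nat -> X) (x : X) : Prop :=
  forall eps, 0 < eps -> exists N, forall n, (N <= n)%nat -> d x (u n) < eps.

Definition right_K_Cauchy {X : Type} (d : X -> X -> R) (u : nat -> X) : Prop :=
  forall eps, 0 < eps -> exists N, forall n k, (N <= n)%nat -> (1 <= k)%nat ->
    d (u (n + k)%nat) (u n) < eps.

Definition seq_right_K_complete {X : Type} (d : X -> X -> R) : Prop :=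
  forall u : nat -> X, right_K_Cauchy d u -> exists x, qm_converges d u x.

Definition Rbar_liminf (u : nat -> Rbar) : Rbar :=
  Rbar_lub (fun v => exists n, v = Rbar_glb (fun w => exists k, (n <= k)%nat /\ w = u k)).

Definition nearly_lsc {X : Type} (d : X -> X -> R) (phi : X -> Rbar) : Prop :=
  forall (u : nat -> X) (x : X),
    (forall n m, n <> m -> u n <> u m) ->
    qm_converges d u x ->
    Rbar_le (phi x) (Rbar_liminf (fun n => phi (u n))).

Definition proper_fun {X : Type} (phi : X -> Rbar) : Prop :=
  exists x, phi x <> p_infty.

Definition bounded_below {X : Type} (phi : X -> Rbar) : Prop :=
  exists m : R, forall x, Rbar_le (Finite m) (phi x).

Definition inf_image {X : Type} (phi : X -> Rbar) : Rbar :=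
  Rbar_glb (fun v => exists x, v = phi x).

Definition S_set {X : Type} (d : X -> X -> R) (phi : X -> Rbar) (x y : X) : Prop :=
  Rbar_le (Rbar_plus (phi y) (Finite (d y x))) (phi x).

(** Approximate steepest descent: from [x_n] move to a point
    [x_(n+1)] of [S(x_n)] whose value is within [1/(n+1)] of the infimum of
    [phi] over [S(x_n)].  The distances telescope against the values,
    [d(x_(n+k), x_n) <= phi x_n - phi x_(n+k)], so the decreasing values make
    the sequence right K-Cauchy; its limit [z] satisfies [phi z <= lim phi x_n]
    by near lower semicontinuity (the terms are distinct since the values
    strictly decrease) and lies in every [S(x_n)].  Any [w] in [S(z)] then
    lies in every [S(x_n)] as well, so [phi w] is within [1/(n+1)] of
    [phi x_(n+1)] for all [n], which forces [phi z <= phi w].  Hence if [phi]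
    had no minimiser, the descent hypothesis applied at [z] would give a
    contradiction. *)

From Stdlib Require Import Reals Lra Lia Classical ClassicalEpsilon.
From Coquelicot Require Import Coquelicot.

Lemma ex_glb_approx (E : R -> Prop) (m : R) :
  (exists r, E r) -> (forall r, E r -> m <= r) ->
  exists g, (forall r, E r -> g <= r) /\
            (forall eps, 0 < eps -> exists r, E r /\ r < g + eps).
Proof.
  intros [r0 Hr0] Hm.
  destruct (completeness (fun x => E (- x))) as [l [Hub Hleast]].
  - exists (- m). intros x Hx. specialize (Hm _ Hx). lra.
  - exists (- r0). rewrite Ropp_involutive. exact Hr0.
  - exists (- l). split.
    + intros r Hr. assert (- r <= l) by (apply Hub; rewrite Ropp_involutive; exact Hr).
      lra.
    + intros eps Heps. apply NNPP. intro Hfar.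
      assert (l <= l - eps); [|lra].
      apply Hleast. intros x Hx. apply Rnot_lt_le. intro Hlt.
      apply Hfar. exists (- x). split; [exact Hx | lra].
Qed.

Lemma le_of_lt_add_inv_S (x y : R) : (forall n, x < y + / INR (S n)) -> x <= y.
Proof.
  intro H. apply Rle_plus_epsilon. intros eps Heps.
  destruct (archimed_cor1 eps Heps) as [[|n] [Hn Hpos]]; [lia|].
  specialize (H n). lra.
Qed.

Lemma decr_bounded_cv (a : nat -> R) (m : R) :
  Un_decreasing a -> (forall n, m <= a n) ->
  exists L, Un_cv a L /\ forall n, L <= a n.
Proof.
  intros Hdec Hm.
  assert (Hlb : has_lb a).
  { exists (- m). intros x [n ->]. unfold opp_seq. specialize (Hm n). lra. }
  destruct (decreasing_cv a Hdec Hlb) as [L HL].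
  exists L. split; [exact HL | exact (decreasing_ineq a L Hdec HL)].
Qed.

Lemma strict_decr_injective (a : nat -> R) :
  (forall n, a (S n) < a n) -> forall n k, n <> k -> a n <> a k.
Proof.
  intros Hlt.
  assert (Hdec : Un_decreasing a) by (intro n; apply Rlt_le, Hlt).
  assert (Hmono : forall n k, (n < k)%nat -> a k < a n).
  { intros n k Hnk. exact (Rle_lt_trans _ _ _ (decreasing_prop a _ _ Hdec Hnk) (Hlt n)). }
  intros n k Hnk Heq.
  destruct (proj1 (Nat.lt_gt_cases n k) Hnk) as [H|H]; specialize (Hmono _ _ H); lra.
Qed.

Lemma Rbar_liminf_le_of_cv (v : nat -> Rbar) (a : nat -> R) (L : R) :
  (forall n, v n = Finite (a n)) -> Un_cv a L -> Rbar_le (Rbar_liminf v) (Finite L).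
Proof.
  intros Hv Ha. unfold Rbar_liminf, Rbar_lub.
  destruct (Rbar_ex_lub _) as [l Hl]; simpl.
  apply (proj2 Hl). intros x [n ->]. unfold Rbar_glb.
  destruct (Rbar_ex_glb _) as [g Hg_glb]; simpl.
  assert (Hg : forall k, (n <= k)%nat -> Rbar_le g (Finite (a k))).
  { intros k Hk. rewrite <- Hv. apply (proj1 Hg_glb). exists k. split; [exact Hk | reflexivity]. }
  destruct g as [g| |]; simpl; [| exact (Hg n (le_n n)) | exact I].
  apply Rle_plus_epsilon. intros eps Heps.
  destruct (Ha eps Heps) as [N HN].
  specialize (Hg (max n N) (Nat.le_max_l _ _)).
  specialize (HN (max n N) (Nat.le_max_r _ _)).
  unfold Rdist in HN. apply Rabs_def2 in HN. simpl in Hg. lra.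
Qed.

Lemma Rbar_finite_of_ne_infty (x : Rbar) : x <> p_infty -> x <> m_infty -> is_finite x.
Proof. destruct x; [reflexivity | contradiction | contradiction]. Qed.

Lemma ex_seq_of_step {T : Type} (P : T -> Prop) (Rel : nat -> T -> T -> Prop) (x0 : T) :
  P x0 -> (forall n x, P x -> exists y, P y /\ Rel n x y) ->
  exists u : nat -> T, forall n, P (u n) /\ Rel n (u n) (u (S n)).
Proof.
  intros Hx0 Hstep.
  assert (next : forall n (x : {x | P x}), {y : {y | P y} | Rel n (proj1_sig x) (proj1_sig y)}).
  { intros n [x Hx].
    destruct (constructive_indefinite_description _ (Hstep n x Hx)) as [y [Hy Hrel]].
    exact (exist _ (exist _ y Hy) Hrel). }
  pose (v := fix v n := match n with O => exist P x0 Hx0 | S k => proj1_sig (next k (v k)) end).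
  exists (fun n => proj1_sig (v n)). intro n.
  split; [exact (proj2_sig (v n)) | exact (proj2_sig (next n (v n)))].
Qed.

Section ValueControlledSequence.

Variables (X : Type) (d : X -> X -> R) (u : nat -> X) (a : nat -> R).
Hypothesis d_refl : forall x, d x x = 0.
Hypothesis d_triangle : forall x y z, d x z <= d x y + d y z.
Hypothesis dist_step : forall n, a (S n) + d (u (S n)) (u n) <= a n.

Lemma dist_le_value_drop n k : d (u (n + k)%nat) (u n) <= a n - a (n + k)%nat.
Proof.
  induction k as [|k IH].
  - rewrite Nat.add_0_r, d_refl. lra.
  - rewrite Nat.add_succ_r.
    pose proof (dist_step (n + k)). pose proof (d_triangle (u (S (n + k))) (u (n + k)%nat) (u n)).
    lra.
Qed.

Variable L : R.
Hypothesis a_ge : forall n, L <= a n.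
Hypothesis a_cv : Un_cv a L.

Lemma right_K_Cauchy_of_value_drop : right_K_Cauchy d u.
Proof.
  intros eps Heps. destruct (a_cv eps Heps) as [N HN].
  exists N. intros n k Hn _.
  specialize (HN n Hn). unfold Rdist in HN. apply Rabs_def2 in HN.
  pose proof (dist_le_value_drop n k). pose proof (a_ge (n + k)%nat). lra.
Qed.

Lemma dist_from_limit_le z : qm_converges d u z -> forall n, d z (u n) <= a n - L.
Proof.
  intros Hz n. apply Rle_plus_epsilon. intros eps Heps.
  destruct (Hz eps Heps) as [N HN]. specialize (HN (n + N)%nat ltac:(lia)).
  pose proof (dist_le_value_drop n N). pose proof (a_ge (n + N)%nat).
  pose proof (d_triangle z (u (n + N)%nat) (u n)). lra.
Qed.

End ValueControlledSequence.

Lemma inf_image_lt_of_not_attained {X : Type} (phi : X -> Rbar) :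
  ~ (exists z, phi z = inf_image phi) -> forall x, Rbar_lt (inf_image phi) (phi x).
Proof.
  intros Hno x.
  assert (Hle : Rbar_le (inf_image phi) (phi x)).
  { unfold inf_image, Rbar_glb. destruct (Rbar_ex_glb _) as [g Hg]; simpl.
    apply (proj1 Hg). exists x. reflexivity. }
  destruct (Rbar_le_lt_or_eq_dec _ _ Hle) as [H|H]; [exact H|].
  exfalso. apply Hno. exists x. symmetry. exact H.
Qed.

Section NearMinimalDescent.

Variables (X : Type) (d : X -> X -> R) (phi : X -> Rbar).
Hypothesis d_triangle : forall x y z, d x z <= d x y + d y z.
Hypothesis phi_not_m_infty : forall x, phi x <> m_infty.

Lemma S_set_finite x y :
  is_finite (phi x) -> S_set d phi x y ->
  is_finite (phi y) /\ real (phi y) + d y x <= real (phi x).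
Proof.
  unfold S_set, is_finite. intros Hx HS. rewrite <- Hx in HS.
  destruct (phi y) as [ry| |] eqn:E; simpl in HS |- *.
  - split; [reflexivity | exact HS].
  - contradiction.
  - exfalso. exact (phi_not_m_infty y E).
Qed.

Definition near_min_descent (eps : R) (x y : X) : Prop :=
  is_finite (phi y) /\ real (phi y) + d y x <= real (phi x) /\ real (phi y) < real (phi x) /\
  forall y', is_finite (phi y') -> real (phi y') + d y' x <= real (phi x) ->
    real (phi y) < real (phi y') + eps.

Variable m : R.
Hypothesis phi_ge : forall x, Rbar_le (Finite m) (phi x).

Lemma near_min_descent_exists eps x :
  0 < eps -> is_finite (phi x) ->
  (exists y, S_set d phi x y /\ Rbar_lt (phi y) (phi x)) ->
  exists y, near_min_descent eps x y.
Proof.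
  intros Heps Hx [y0 [HS0 Hlt0]].
  pose (E r := exists y, phi y = Finite r /\ r + d y x <= real (phi x) /\ r < real (phi x)).
  destruct (ex_glb_approx E m) as [g [Hg Happrox]].
  - destruct (S_set_finite x y0 Hx HS0) as [Hy0 Hd0].
    exists (real (phi y0)), y0. rewrite <- Hx, <- Hy0 in Hlt0.
    repeat split; [symmetry; exact Hy0 | exact Hd0 | exact Hlt0].
  - intros r [y [Hy _]]. pose proof (phi_ge y) as Hm. rewrite Hy in Hm. exact Hm.
  - destruct (Happrox eps Heps) as [r [[y [Hy [Hd Hlt]]] Hclose]].
    exists y. unfold near_min_descent, is_finite. rewrite Hy. simpl.
    repeat split; try assumption.
    intros y' Hy' Hd'.
    destruct (Rlt_or_le (real (phi y')) (real (phi x))) as [Hlt'|Hge]; [|lra].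
    assert (Hy'E : E (real (phi y')))
      by (exists y'; repeat split; [symmetry; exact Hy' | exact Hd' | exact Hlt']).
    specialize (Hg _ Hy'E). lra.
Qed.

Lemma near_min_descent_seq :
  (forall x, exists y, S_set d phi x y /\ Rbar_lt (phi y) (phi x)) ->
  forall x0, is_finite (phi x0) ->
  exists u : nat -> X, forall n,
    is_finite (phi (u n)) /\ near_min_descent (/ INR (S n)) (u n) (u (S n)).
Proof.
  intros Hdesc x0 Hx0.
  apply (ex_seq_of_step (fun x => is_finite (phi x))
           (fun n => near_min_descent (/ INR (S n))) x0 Hx0).
  intros n x Hx.
  destruct (near_min_descent_exists (/ INR (S n)) x) as [y Hy];
    [apply Rinv_0_lt_compat, lt_0_INR; lia | exact Hx | apply Hdesc |].
  exists y. split; [apply Hy | exact Hy].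
Qed.

Lemma limit_min_on_S_set (u : nat -> X) (L : R) (z : X) :
  (forall n, near_min_descent (/ INR (S n)) (u n) (u (S n))) ->
  (forall n, L <= real (phi (u n))) ->
  Rbar_le (phi z) (Finite L) ->
  (forall n, d z (u n) <= real (phi (u n)) - L) ->
  forall w, S_set d phi z w -> Rbar_le (phi z) (phi w).
Proof.
  intros Hstep HL Hz Hdz w Hw.
  assert (Hzf : is_finite (phi z)).
  { apply Rbar_finite_of_ne_infty; [intro Hinf; rewrite Hinf in Hz; exact Hz | apply phi_not_m_infty]. }
  destruct (S_set_finite z w Hzf Hw) as [Hwf Hdw].
  rewrite <- Hzf in Hz |- *. rewrite <- Hwf. simpl in Hz |- *.
  assert (L <= real (phi w)); [|lra].
  apply le_of_lt_add_inv_S. intro n.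
  destruct (Hstep n) as [_ [_ [_ Hnear]]].
  pose proof (Hnear w Hwf ltac:(pose proof (Hdz n); pose proof (d_triangle w z (u n)); lra)).
  pose proof (HL (S n)). lra.
Qed.

End NearMinimalDescent.

Theorem theorem3p5 (X : Type) (d : X -> X -> R) (phi : X -> Rbar) :
  is_quasi_metric d ->
  seq_right_K_complete d ->
  (forall x, phi x <> m_infty) ->
  proper_fun phi ->
  bounded_below phi ->
  nearly_lsc d phi ->
  (forall x, Rbar_lt (inf_image phi) (phi x) ->
     exists y, S_set d phi x y /\ Rbar_lt (phi y) (phi x)) ->
  exists z, phi z = inf_image phi.
Proof.
  intros [_ [d_refl [d_triangle _]]] Hcomplete Hnm [x0 Hx0] [m Hm] Hnlsc Hdesc.
  apply NNPP. intro Hno.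
  assert (Hdesc_all : forall x, exists y, S_set d phi x y /\ Rbar_lt (phi y) (phi x))
    by (intro x; apply Hdesc, inf_image_lt_of_not_attained, Hno).
  destruct (near_min_descent_seq X d phi Hnm m Hm Hdesc_all x0
              (Rbar_finite_of_ne_infty _ Hx0 (Hnm x0))) as [u Hu].
  pose (a n := real (phi (u n))).
  assert (Hdist : forall n, a (S n) + d (u (S n)) (u n) <= a n) by apply Hu.
  assert (Hdecr : forall n, a (S n) < a n) by apply Hu.
  destruct (decr_bounded_cv a m) as [L [Hcv HLe]].
  { intro n. apply Rlt_le, Hdecr. }
  { intro n. pose proof (Hm (u n)) as Hmn. rewrite <- (proj1 (Hu n)) in Hmn. exact Hmn. }
  destruct (Hcomplete u (right_K_Cauchy_of_value_drop X d u a d_refl d_triangle Hdist L HLe Hcv)) as [z Hz].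
  assert (Hinj : forall n k, n <> k -> u n <> u k).
  { intros n k Hnk Heq. apply (strict_decr_injective a Hdecr n k Hnk). unfold a. rewrite Heq. reflexivity. }
  assert (HzL : Rbar_le (phi z) (Finite L)).
  { apply (Rbar_le_trans _ _ _ (Hnlsc u z Hinj Hz)).
    apply (Rbar_liminf_le_of_cv _ a); [intro n; symmetry; apply Hu | exact Hcv]. }
  destruct (Hdesc_all z) as [w [Hw Hlt]].
  apply (Rbar_lt_not_le _ _ Hlt).
  apply (limit_min_on_S_set X d phi d_triangle Hnm u L); try assumption.
  - apply Hu.
  - exact (dist_from_limit_le X d u a d_refl d_triangle Hdist L HLe z Hz).
Qed.
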